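(* Let $R$ be a commutative ring of Krull dimension $0$ which is integral over an Artinian subring $R_0$, and write $\mathcal{F}=\mathcal{F}(R_0,R)$. Then for every $n\ge 1$, the ring $\mathcal{F}\llbracket X_1,\ldots,X_n\rrbracket$ is a faithfully flat $R$-module.
   Context: All rings are commutative with identity, and subrings share the identity. For a $0$-dimensional ring $R$ and an Artinian subring $R_0\subseteq R$ such that $R$ is integral over $R_0$, let $\mathcal{F}(R_0,R)=\{R_\alpha\}$ denote the family of all subrings of $R$ that are finitely generated as $R_0$-algebras; this family is directed, each $R_\alpha$ is Artinian, and $R=\bigcup_\alpha R_\alpha$. The ring of Artinian power series $\mathcal{F}\llbracket X_1,\ldots,X_n\rrbracket$ is the set of all $f\in R\llbracket X_1,\ldots,X_n\rrbracket$ such that all coefficients of $f$ lie in a single $R_\alpha\in\mathcal{F}$; equivalently, $\mathcal{F}\llbracket X_1,\ldots,X_n\rrbracket=\bigcup_\alpha R_\alpha\llbracket X_1,\ldots,X_n\rrbracket$, which is a subring of $R\llbracket X_1,\ldots,X_n\rrbracket$. *)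

From HB Require Import structures.
From mathcomp Require Import all_boot all_order all_algebra.
From mathcomp Require Import boolp classical_sets functions.
Set Implicit Arguments.
Unset Strict Implicit.
Unset Printing Implicit Defensive.
Import Order.TTheory GRing.Theory.
Local Open Scope classical_set_scope.
Local Open Scope ring_scope.

Definition is_ideal (R : comNzRingType) (I : set R) : Prop :=
  [/\ I 0, (forall x y, I x -> I y -> I (x + y)) & (forall r x, I x -> I (r * x))].

Definition prime_ideal (R : comNzRingType) (P : set R) : Prop :=
  [/\ is_ideal P, ~ P 1 & (forall x y, P (x * y) -> P x \/ P y)].

Definition maximal_ideal (R : comNzRingType) (M : set R) : Prop :=
  [/\ is_ideal M, ~ M 1 &
      (forall J : set R, is_ideal J -> M `<=` J -> ~ J 1 -> J = M)].

Definition krull_dim0 (R : comNzRingType) : Prop :=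
  forall P : set R, prime_ideal P -> maximal_ideal P.

Definition is_subring (R : comNzRingType) (S : set R) : Prop :=
  [/\ S 1, (forall x y, S x -> S y -> S (x - y)) & (forall x y, S x -> S y -> S (x * y))].

Definition ideal_of (R : comNzRingType) (R0 J : set R) : Prop :=
  [/\ J `<=` R0, J 0, (forall x y, J x -> J y -> J (x + y))
    & (forall r x, R0 r -> J x -> J (r * x))].

Definition artinian_subring (R : comNzRingType) (R0 : set R) : Prop :=
  is_subring R0 /\
  forall J : nat -> set R, (forall k, ideal_of R0 (J k)) ->
    (forall k, J k.+1 `<=` J k) -> exists N, forall k, (N <= k)%N -> J k = J N.

Definition integral_over (R : comNzRingType) (R0 : set R) : Prop :=
  forall x : R, exists p : {poly R},
    [/\ p \is monic, (forall i, R0 p`_i) & root p x].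

Definition gen_subalg (R : comNzRingType) (R0 : set R) (s : seq R) : set R :=
  fun x => forall S : set R, is_subring S -> R0 `<=` S ->
    (forall y, y \in s -> S y) -> S x.

(* Power series in X_1..X_n over R, identified with their coefficient
   functions on multi-indices (exponent vectors) 'I_n -> nat. *)
Definition mindex (n : nat) := {ffun 'I_n -> nat}.

(* f is an Artinian power series: all coefficients lie in a single R_alpha. *)
Definition in_F (R : comNzRingType) (R0 : set R) (n : nat) (f : mindex n -> R) : Prop :=
  exists s : seq R, forall a, gen_subalg R0 s (f a).

Section ArtinianPS.
Context (R : comNzRingType) (R0 : set R) (n : nat).

Definition in_Fb : {pred mindex n -> R^o} := fun f => `[< in_F R0 f >].

Record artinian_ps := APS { ps_coef : mindex n -> R^o ; _ : ps_coef \in in_Fb }.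

HB.instance Definition _ := [isSub for ps_coef].
HB.instance Definition _ := [Choice of artinian_ps by <:].

Lemma in_Fb_submod : GRing.submod_closed in_Fb.
Proof.
split.
  apply/asboolP; exists [::] => a S [S1 SB SM] _ _.
  by have := SB 1 1 S1 S1; rewrite subrr.
move=> c u v /asboolP [s Hu] /asboolP [t Hv]; apply/asboolP.
exists (c :: s ++ t) => a S [S1 SB SM] H0 Hs.

have sub0 : forall x, S x -> S (- x).
  by move=> x Sx; rewrite -sub0r; apply: (SB) => //; have := SB 1 1 S1 S1; rewrite subrr.
have add0 : forall x y, S x -> S y -> S (x + y).
  by move=> x y Sx Sy; rewrite -[y]opprK; apply: (SB) => //; apply: (sub0).
rewrite /= !fctE; apply: (add0).
  apply: (SM); first by apply: Hs; rewrite inE eqxx.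
  by apply: Hu => // y ys; apply: Hs; rewrite inE mem_cat ys orbT.
by apply: Hv => // y yt; apply: Hs; rewrite inE mem_cat yt !orbT.
Qed.

HB.instance Definition _ := GRing.isSubmodClosed.Build R (mindex n -> R^o) in_Fb in_Fb_submod.
HB.instance Definition _ := [SubChoice_isSubLmodule of artinian_ps by <:].

End ArtinianPS.

Definition bilinear_map (R : comNzRingType) (N M P : lmodType R) (B : N -> M -> P) : Prop :=
  (forall a x y m, B (a *: x + y) m = a *: B x m + B y m) /\
  (forall a n x y, B n (a *: x + y) = a *: B n x + B n y).

(* The element sum_k n_k (x) m_k of N (x)_R M (encoded by the list of pairs s)
   is zero: every R-bilinear map kills it. *)
Definition tensor_zero (R : comNzRingType) (N M : lmodType R) (s : seq (N * M)) : Prop :=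
  forall (P : lmodType R) (B : N -> M -> P), bilinear_map B ->
    \sum_(p <- s) B p.1 p.2 = 0.

Definition tensor_eq (R : comNzRingType) (N M : lmodType R) (s t : seq (N * M)) : Prop :=
  tensor_zero (s ++ [seq (- p.1, p.2) | p <- t]).

Definition exact_at (R : comNzRingType) (N1 N2 N3 : lmodType R)
  (f : N1 -> N2) (g : N2 -> N3) : Prop :=
  forall y, g y = 0 -> exists x, f x = y.

Definition tensor_exact_at (R : comNzRingType) (N1 N2 N3 M : lmodType R)
  (f : N1 -> N2) (g : N2 -> N3) : Prop :=
  forall s : seq (N2 * M), tensor_zero [seq (g p.1, p.2) | p <- s] ->
    exists t : seq (N1 * M), tensor_eq [seq (f p.1, p.2) | p <- t] s.

Definition faithfully_flat (R : comNzRingType) (M : lmodType R) : Prop :=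
  forall (N1 N2 N3 : lmodType R) (f : {linear N1 -> N2}) (g : {linear N2 -> N3}),
    (forall x, g (f x) = 0) ->
    (exact_at f g <-> tensor_exact_at M f g).

(* Integrality makes every finitely generated R0-subalgebra of R a finite
   R0-module, and the Artinian ring R0 is Noetherian (Hopkins).  Hence for
   Artinian power series m_1, ..., m_k the coefficient columns
   (m_1(a), ..., m_k(a)), a ranging over all exponents, are R0-combinations of
   finitely many of them, which yields power series y_1, ..., y_r and
   exponents e_1, ..., e_r with m_i = sum_j m_i(e_j) y_j.  Through this
   presentation a relation sum_i x_i (x) m_i = 0 in N (x) F[[X]] becomes
   finitely many relations sum_i m_i(e_j) x_i = 0 in N, which gives flatness;
   faithfulness holds because taking the constant coefficient splits off R. *)

From HB Require Import structures.
From mathcomp Require Import all_boot all_order all_algebra.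
From mathcomp Require Import boolp classical_sets functions.
From mathcomp Require Import ring zify.
Set Implicit Arguments.
Unset Strict Implicit.
Unset Printing Implicit Defensive.
Import Order.TTheory GRing.Theory.
Local Open Scope classical_set_scope.
Local Open Scope ring_scope.

Section SubringSpan.
Variables (R : comNzRingType) (S : set R).
Hypothesis subS : is_subring S.

Lemma subring1 : S 1. Proof. by case: subS. Qed.
Lemma subringB x y : S x -> S y -> S (x - y). Proof. by case: subS => _ + _; apply. Qed.
Lemma subringM x y : S x -> S y -> S (x * y). Proof. by case: subS => _ _; apply. Qed.
Lemma subring0 : S 0. Proof. by rewrite -(subrr 1); apply: subringB; apply: subring1. Qed.
Lemma subringN x : S x -> S (- x).
Proof. by move=> Sx; rewrite -sub0r; apply: subringB => //; apply: subring0. Qed.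
Lemma subringD x y : S x -> S y -> S (x + y).
Proof. by move=> Sx Sy; rewrite -[y]opprK; apply: subringB => //; apply: subringN. Qed.

Variable V : lmodType R.

Fixpoint in_span (l : seq V) (x : V) : Prop :=
  if l is v :: l' then exists2 c, S c & in_span l' (x - c *: v) else x = 0.

Lemma span0 l : in_span l 0.
Proof.
by elim: l => [|v l IH] //=; exists 0; [exact: subring0 | rewrite scale0r subr0].
Qed.

Lemma spanD l x y : in_span l x -> in_span l y -> in_span l (x + y).
Proof.
elim: l x y => [|v l IH] x y /=; first by move=> -> ->; rewrite addr0.
move=> [c Sc Hx] [d Sd Hy]; exists (c + d); first exact: subringD.
by rewrite scalerDl opprD addrACA; apply: IH.
Qed.

Lemma spanZ l a x : S a -> in_span l x -> in_span l (a *: x).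
Proof.
elim: l x => [|v l IH] x Sa /=; first by move=> ->; rewrite scaler0.
move=> [c Sc Hx]; exists (a * c); first exact: subringM.
by rewrite -scalerA -scalerBr; apply: IH.
Qed.

Lemma spanN l x : in_span l x -> in_span l (- x).
Proof. by rewrite -scaleN1r; apply: spanZ; apply/subringN/subring1. Qed.

Lemma spanB l x y : in_span l x -> in_span l y -> in_span l (x - y).
Proof. by move=> Hx Hy; apply: spanD => //; apply: spanN. Qed.

Lemma span_sum I (r : seq I) (F : I -> V) l :
  (forall i, in_span l (F i)) -> in_span l (\sum_(i <- r) F i).
Proof.
move=> HF; elim: r => [|i r IH]; first by rewrite big_nil; apply: span0.
by rewrite big_cons; apply: spanD.
Qed.

Lemma span_mem l v : v \in l -> in_span l v.
Proof.
elim: l => [|w l IH] //=; rewrite inE => /orP [/eqP ->|vl].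
  by exists 1; [exact: subring1 | rewrite scale1r subrr; apply: span0].
by exists 0; [exact: subring0 | rewrite scale0r subr0; apply: IH].
Qed.

Lemma span_trans l1 l2 x :
  (forall w, w \in l2 -> in_span l1 w) -> in_span l2 x -> in_span l1 x.
Proof.
elim: l2 x => [|v l2 IH] x H /=; first by move=> ->; apply: span0.
move=> [c Sc Hx]; rewrite -(subrK (c *: v) x); apply: spanD.
  by apply: IH => // w wl; apply: H; rewrite inE wl orbT.
by apply: spanZ => //; apply: H; rewrite mem_head.
Qed.

Lemma span_subset l1 l2 x : {subset l2 <= l1} -> in_span l2 x -> in_span l1 x.
Proof. by move=> sub; apply: span_trans => w /sub; apply: span_mem. Qed.

Lemma span_cat l1 l2 x :
  in_span (l1 ++ l2) x -> exists2 y, in_span l1 y & in_span l2 (x - y).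
Proof.
elim: l1 x => [|w l1 IH] x /=; first by exists 0; [|rewrite subr0].
move=> [c Sc /IH [y Hy Hxy]]; exists (c *: w + y); last by rewrite opprD addrA.
by exists c => //; rewrite addrAC subrr add0r.
Qed.

Lemma in_spanP l x : in_span l x ->
  exists c : nat -> R, (forall i, S (c i)) /\ x = \sum_(i < size l) c i *: l`_i.
Proof.
elim: l x => [|v l IH] x /=.
  by move=> ->; exists (fun=> 0); split=> [_|]; [exact: subring0 | rewrite big_ord0].
move=> [c Sc /IH [d [Sd Hd]]]; exists (fun i => if i is i'.+1 then d i' else c).
by split=> [[]|] //; rewrite big_ord_recl /= -Hd addrC subrK.
Qed.

End SubringSpan.

Lemma span_linear (R : comNzRingType) (S : set R) (V W : lmodType R) (f : V -> W) l x :
  is_subring S -> linear f -> in_span S l x -> in_span S (map f l) (f x).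
Proof.
move=> subS lin_f.
have f0 : f 0 = 0.
  have := lin_f 1 0 0; rewrite scaler0 add0r scale1r => f00.
  by apply: (addrI (f 0)); rewrite addr0 -f00.
have fZ a u : f (a *: u) = a *: f u by rewrite -[a *: u]addr0 lin_f f0 addr0.
have fB u v : f (u - v) = f u - f v.
  by rewrite addrC -scaleN1r lin_f scaleN1r addrC.
elim: l x => [|v l IH] x /=; first by move=> ->.
by move=> [c Sc /IH]; rewrite fB fZ; exists c.
Qed.

Section IdealsOfSubring.
Variables (R : comNzRingType) (R0 : set R).
Hypothesis subR0 : is_subring R0.
Local Notation ideal I := (ideal_of R0 I).

Section IdealFacts.
Variable I : set R.
Hypothesis idI : ideal I.

Lemma ideal_sub : I `<=` R0. Proof. by case: idI. Qed.
Lemma ideal0 : I 0. Proof. by case: idI. Qed.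
Lemma idealD x y : I x -> I y -> I (x + y). Proof. by case: idI => _ _ + _; apply. Qed.
Lemma idealMl r x : R0 r -> I x -> I (r * x). Proof. by case: idI => _ _ _; apply. Qed.
Lemma idealMr r x : I x -> R0 r -> I (x * r). Proof. by rewrite mulrC => *; apply: idealMl. Qed.
Lemma idealN x : I x -> I (- x).
Proof. by rewrite -mulN1r; apply: idealMl; apply/(subringN subR0)/(subring1 subR0). Qed.
Lemma idealB x y : I x -> I y -> I (x - y). Proof. by move=> *; apply: idealD => //; apply: idealN. Qed.

End IdealFacts.

Lemma ideal_subring : ideal R0.
Proof.
split=> //; [exact: (subring0 subR0) | exact: (subringD subR0) | by move=> *; apply: (subringM subR0)].
Qed.

Lemma ideal_zero : ideal [set 0].
Proof.
split=> [x -> | | x y -> -> | r x _ ->] //; rewrite ?addr0 ?mulr0 //; exact: (subring0 subR0).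
Qed.

Definition principal (x : R) : set R := fun y => exists2 r, R0 r & y = r * x.

Lemma principal_ideal x : R0 x -> ideal (principal x).
Proof.
move=> R0x; split.
- by move=> y [r R0r ->]; apply: (subringM subR0).
- by exists 0; [exact: (subring0 subR0) | rewrite mul0r].
- by move=> y z [r R0r ->] [s R0s ->]; exists (r + s); [exact: (subringD subR0) | rewrite mulrDl].
- by move=> t y R0t [r R0r ->]; exists (t * r); [exact: (subringM subR0) | rewrite mulrA].
Qed.

Lemma principal_self x : principal x x.
Proof. by exists 1; [exact: (subring1 subR0) | rewrite mul1r]. Qed.

Definition colon (J : set R) (x : R) : set R := fun z => R0 z /\ J (z * x).

Lemma colon_ideal J x : ideal J -> ideal (colon J x).
Proof.
move=> idJ; split.
- by move=> y [].
- by split; [exact: (subring0 subR0) | rewrite mul0r; apply: ideal0].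
- move=> y z [R0y Jy] [R0z Jz]; split; first exact: (subringD subR0).
  by rewrite mulrDl; apply: idealD.
- move=> t y R0t [R0y Jy]; split; first exact: (subringM subR0).
  by rewrite -mulrA; apply: idealMl.
Qed.

Lemma span_ideal I (l : seq R^o) (x : R^o) :
  ideal I -> (forall v, v \in l -> I v) -> in_span R0 l x -> I x.
Proof.
move=> idI; elim: l x => [|v l IH] x lI /=; first by move=> ->; apply: ideal0.
move=> [c R0c Hx]; rewrite -(subrK (c *: v) x); apply: (idealD idI).
  by apply: IH Hx => w wl; apply: lI; rewrite inE wl orbT.
by apply: (idealMl idI) => //; apply: lI; rewrite mem_head.
Qed.

Definition ideal_mul (I J : set R) : set R := fun x =>
  forall K, ideal K -> (forall i j, I i -> J j -> K (i * j)) -> K x.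

Lemma ideal_mul_ideal I J : I `<=` R0 -> J `<=` R0 -> ideal (ideal_mul I J).
Proof.
move=> IR0 JR0; split.
- move=> x; apply; first exact: ideal_subring.
  by move=> i j Ii Jj; apply: (subringM subR0); [exact: IR0 Ii | exact: JR0 Jj].
- by move=> K idK _; apply: ideal0.
- by move=> x y Hx Hy K idK HK; apply: idealD => //; [apply: Hx | apply: Hy].
- by move=> r x R0r Hx K idK HK; apply: idealMl => //; apply: Hx.
Qed.

Lemma ideal_mul_mem I J i j : I i -> J j -> ideal_mul I J (i * j).
Proof. by move=> Ii Jj K _; apply. Qed.

Lemma ideal_mul_min I J K :
  ideal K -> (forall i j, I i -> J j -> K (i * j)) -> ideal_mul I J `<=` K.
Proof. by move=> idK HK x; apply. Qed.

Lemma ideal_mul_subl I J : ideal I -> J `<=` R0 -> ideal_mul I J `<=` I.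
Proof. by move=> idI JR0; apply: ideal_mul_min => // i j Ii /JR0; apply: idealMr. Qed.

Lemma ideal_mul_subr I J : I `<=` R0 -> ideal J -> ideal_mul I J `<=` J.
Proof. by move=> IR0 idJ; apply: ideal_mul_min => // i j /IR0; apply: idealMl. Qed.

Definition maximal_ideal_of (m : set R) :=
  [/\ ideal m, ~ m 1 & forall J, ideal J -> m `<=` J -> ~ J 1 -> J = m].

Lemma maximal_ideal_of_ideal m : maximal_ideal_of m -> ideal m.
Proof. by case. Qed.

Lemma maximal_inv_mod m c : maximal_ideal_of m -> R0 c -> ~ m c ->
  exists u mu, [/\ R0 u, m mu & u * c = 1 - mu].
Proof.
move=> [idm m1 mmax] R0c mc.
pose J y := exists mu u, [/\ m mu, R0 u & y = mu + u * c].
have idJ : ideal J.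
  split.
  - move=> y [mu [u [mmu R0u ->]]]; apply: (subringD subR0) => //.
      exact: ideal_sub mmu.
    exact: (subringM subR0).
  - by exists 0, 0; split; [apply: ideal0 | apply: (subring0 subR0) | rewrite mul0r addr0].
  - move=> x y [mu [u [mmu R0u ->]]] [mu' [u' [mmu' R0u' ->]]].
    exists (mu + mu'), (u + u'); split; [exact: idealD | exact: (subringD subR0) | ].
    by rewrite mulrDl addrACA.
  - move=> r y R0r [mu [u [mmu R0u ->]]]; exists (r * mu), (r * u); split.
    + exact: idealMl. + exact: (subringM subR0). + by rewrite mulrDr mulrA.
have mJ : m `<=` J.
  by move=> y my; exists y, 0; split => //; [exact: (subring0 subR0) | rewrite mul0r addr0].
have [mu [u [mmu R0u E]]] : J 1.
  apply: contrapT => nJ1; apply: mc; rewrite -(mmax J idJ mJ nJ1).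
  by exists 0, 1; split; [apply: ideal0 | exact: (subring1 subR0) | rewrite mul1r add0r].
by exists u, mu; split => //; rewrite E [mu + _]addrC addrK.
Qed.

Lemma maximal_ideal_above A : ideal A -> ~ A 1 ->
  exists2 m, maximal_ideal_of m & A `<=` m.
Proof.
move=> idA nA1.
pose P (X : set R) := (ideal X /\ A `<=` X /\ ~ X 1) \/ X = set0.
have [|M [PM Mmax]] := @Zorn_bigcup R P.
  move=> F FP Ftot.
  have [[X0 [FX0 [z X0z]]]|Fempty] := pselect (exists X, F X /\ X !=set0); last first.
    right; apply/seteqP; split => // y [X FX Xy].
    by apply: Fempty; exists X; split => //; exists y.
  have Fid X : F X -> X !=set0 -> ideal X /\ A `<=` X /\ ~ X 1.
    by move=> FX [y Xy]; case: (FP X FX) => // Xempty; rewrite Xempty in Xy.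
  have [idX0 [AX0 _]] := Fid X0 FX0 (ex_intro _ z X0z).
  have common X Y x y : F X -> F Y -> X x -> Y y ->
      exists Z, [/\ F Z, ideal Z, Z x & Z y].
    move=> FX FY Xx Yy; have [XY|YX] := Ftot X Y FX FY.
    - by exists Y; split => //; [case: (Fid Y FY) => //; exists y | apply: XY].
    - by exists X; split => //; [case: (Fid X FX) => //; exists x | apply: YX].
  left; split; [split|split].
  - by move=> x [X FX Xx]; have [idX _] := Fid X FX (ex_intro _ x Xx); exact: ideal_sub Xx.
  - by exists X0 => //; apply: ideal0.
  - move=> x y [X FX Xx] [Y FY Yy]; have [Z [FZ idZ Zx Zy]] := common X Y x y FX FY Xx Yy.
    by exists Z => //; apply: idealD.
  - move=> r x R0r [X FX Xx]; exists X => //.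
    by have [idX _] := Fid X FX (ex_intro _ x Xx); apply: idealMl.
  - by move=> y Ay; exists X0 => //; apply: AX0.
  - by move=> [X FX X1]; have [_ [_ nX1]] := Fid X FX (ex_intro _ 1 X1).
case: PM => [[idM [AM nM1]]|M0]; last first.
  exfalso; apply: (Mmax A); last by left; split; [|split].
  by rewrite M0; split => // /(_ 0 (ideal0 idA)).
exists M => //; split => // J idJ MJ nJ1.
apply: contrapT => JM; apply: (Mmax J); last by left; split => //; split => //; apply: subset_trans MJ.
by split => // JM'; apply: JM; apply/seteqP.
Qed.

Lemma eq0_if_maximal_absorb x : R0 x ->
  (forall m, maximal_ideal_of m -> exists2 mu, m mu & x = mu * x) -> x = 0.
Proof.
move=> R0x absorb; apply: contrapT => x0.
have nAnn1 : ~ colon [set 0] x 1 by case=> _; rewrite mul1r.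
have [m maxm Annm] := maximal_ideal_above (colon_ideal x ideal_zero) nAnn1.
have [mu mmu xE] := absorb m maxm.
have [idm m1 _] := maxm; apply: m1; rewrite -(subrK mu 1); apply: idealD => //.
apply: Annm; split; first by apply: (subringB subR0); [exact: (subring1 subR0) | exact: ideal_sub mmu].
by rewrite mulrBl mul1r -xE subrr.
Qed.

Lemma principal_absorbed m x : maximal_ideal_of m -> R0 x ->
  ideal_mul m (principal x) = principal x -> exists2 mu, m mu & x = mu * x.
Proof.
move=> [idm _ _] R0x E.
pose Y y := exists2 mu, m mu & y = mu * x.
have idY : ideal Y.
  split.
  - by move=> y [mu mmu ->]; apply: (subringM subR0) => //; exact: ideal_sub mmu.
  - by exists 0; [exact: ideal0 | rewrite mul0r].
  - by move=> y z [r mr ->] [s ms ->]; exists (r + s); [exact: idealD | rewrite mulrDl].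
  - by move=> t y R0t [r mr ->]; exists (t * r); [exact: idealMl | rewrite mulrA].
have : ideal_mul m (principal x) x by rewrite E; exact: principal_self.
move/(ideal_mul_min idY); apply=> mu _ mmu [r R0r ->].
by exists (mu * r); [exact: idealMr | rewrite mulrA].
Qed.

End IdealsOfSubring.

Section SpanModulo.
Variables (R : comNzRingType) (R0 : set R).
Hypothesis subR0 : is_subring R0.
Local Notation ideal I := (ideal_of R0 I).
Local Notation maximal m := (maximal_ideal_of R0 m).

Definition span_mod (C : set R) (l : seq R^o) (x : R^o) :=
  exists2 k, C k & in_span R0 l (x - k).

Lemma span_mod_trans C l1 l2 x : (forall w, w \in l2 -> in_span R0 l1 w) ->
  span_mod C l2 x -> span_mod C l1 x.
Proof. by move=> l21 [k Ck Hx]; exists k => //; apply: span_trans l21 Hx. Qed.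

Lemma span_mod_subset C l1 l2 x : {subset l2 <= l1} -> span_mod C l2 x -> span_mod C l1 x.
Proof. by move=> l21; apply: span_mod_trans => w /l21; apply: span_mem. Qed.

Lemma span_mod_union_ideal C K (L : nat -> seq R^o) :
  ideal K -> ideal C -> C `<=` K -> (forall J w, w \in L J -> K w) ->
  (forall J J', (J <= J')%N -> {subset L J <= L J'}) ->
  ideal (fun y => exists J, span_mod C (L J) y).
Proof.
move=> idK idC CK LK Lmono; split=> /=.
- move=> y [J [k Ck Hy]]; apply: (ideal_sub idK); rewrite -(subrK k y).
  by apply: (idealD idK); [exact: (span_ideal idK (LK J) Hy) | exact: CK].
- by exists 0%N, 0; [exact: (ideal0 idC) | rewrite subr0; apply: (span0 subR0)].
- move=> x y [J1 [k1 Ck1 Hx]] [J2 [k2 Ck2 Hy]]; exists (maxn J1 J2), (k1 + k2).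
    exact: (idealD idC).
  rewrite opprD addrACA; apply: (spanD subR0).
    exact: (span_subset subR0 (Lmono _ _ (leq_maxl J1 J2)) Hx).
  exact: (span_subset subR0 (Lmono _ _ (leq_maxr J1 J2)) Hy).
- move=> r x R0r [J [k Ck Hx]]; exists J, (r * k); first exact: (idealMl idC).
  by rewrite -mulrBr; apply: (spanZ subR0).
Qed.

(* The exchange property of the R0/m-vector space K/Km. *)
Lemma span_mod_exchange K m (l : seq R^o) (v z : R^o) :
  ideal K -> maximal m -> K v ->
  span_mod (ideal_mul R0 K m) (l ++ [:: v]) z ->
  span_mod (ideal_mul R0 K m) l z \/ span_mod (ideal_mul R0 K m) (z :: l) v.
Proof.
move=> idK maxm Kv [k Ck /span_cat [y Hy /= [c R0c E0]]].
have idm := maximal_ideal_of_ideal maxm.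
have idC : ideal (ideal_mul R0 K m) by apply: ideal_mul_ideal => //; apply: ideal_sub.
have zE : z = k + y + c * v.
  by apply/eqP; rewrite -subr_eq0 -E0; apply/eqP; rewrite /GRing.scale /=; ring.
have [mc|mc] := pselect (m c).
  left; exists (k + c * v); first by apply: (idealD idC) => //; rewrite mulrC; apply: ideal_mul_mem.
  by have -> : z - (k + c * v) = y by rewrite zE; ring.
have [u [mu [R0u mmu ucE]]] := maximal_inv_mod subR0 maxm R0c mc.
right; exists (mu * v - u * k).
  by apply: (idealB subR0 idC); [rewrite mulrC; apply: ideal_mul_mem | apply: (idealMl idC)].
have -> : v - (mu * v - u * k) = u * z - u * y.
  by rewrite zE mulrDr mulrDr mulrA ucE; ring.
apply: (spanB subR0); apply: (spanZ subR0 R0u); first by apply: (span_mem subR0); rewrite mem_head.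
by apply: (span_subset subR0) Hy => w wl; rewrite inE wl orbT.
Qed.

End SpanModulo.

Lemma avoiding_sequence (E : Type) (P : seq E -> E -> Prop) :
  (forall es, exists e, P es e) ->
  exists e : nat -> E, forall n, P [seq e i | i <- iota 0 n] (e n).
Proof.
move=> /choice [next Pnext].
pose fix s n := if n is n'.+1 then rcons (s n') (next (s n')) else [::].
exists (fun n => next (s n)) => n; suff -> : [seq next (s i) | i <- iota 0 n] = s n by [].
elim: n => [|n IH] //; by rewrite -addn1 iotaD map_cat IH add0n addn1 cats1.
Qed.

Section ArtinianSubring.
Variables (R : comNzRingType) (R0 : set R).
Hypothesis artR0 : artinian_subring R0.
Let subR0 : is_subring R0 := proj1 artR0.
Local Notation ideal I := (ideal_of R0 I).
Local Notation maximal m := (maximal_ideal_of R0 m).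

Lemma dcc_minimal (P : set R -> Prop) I0 : ideal I0 -> P I0 ->
  exists I, [/\ ideal I, P I & forall J, ideal J -> P J -> J `<=` I -> J = I].
Proof.
move=> idI0 PI0; apply: contrapT => nomin.
have step I : exists J, ideal I /\ P I -> [/\ ideal J, P J, J `<=` I & J <> I].
  have [[idI PI]|nI] := pselect (ideal I /\ P I); last by exists I.
  apply: contrapT => nJ; apply: nomin; exists I; split => // J idJ PJ JI.
  by apply: contrapT => JnI; apply: nJ; exists J.
have [next Pnext] := choice step.
pose J k := iter k next I0.
have idPJ k : ideal (J k) /\ P (J k).
  by elim: k => [|k [idJ PJ]] //=; have [] := Pnext (J k) (conj idJ PJ).
have decJ k : J k.+1 `<=` J k by have [] := Pnext (J k) (idPJ k).
have [N stable] := (proj2 artR0) J (fun k => proj1 (idPJ k)) decJ.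
have [_ _ _] := Pnext (J N) (idPJ N); apply.
exact: stable N.+1 (leqnSn N).
Qed.

Inductive prod_maximal : set R -> Prop :=
| prod_maximal_top : prod_maximal R0
| prod_maximal_mul K m : prod_maximal K -> maximal m -> prod_maximal (ideal_mul R0 K m).

Lemma prod_maximal_ideal K : prod_maximal K -> ideal K.
Proof.
elim=> [|K' m _ idK' /maximal_ideal_of_ideal idm]; first exact: ideal_subring.
by apply: ideal_mul_ideal => //; apply: ideal_sub.
Qed.

Lemma minimal_prod_maximal :
  exists2 Q, prod_maximal Q & forall m, maximal m -> ideal_mul R0 Q m = Q.
Proof.
have [Q [idQ pmQ Qmin]] := dcc_minimal (ideal_subring subR0) prod_maximal_top.
exists Q => // m maxm; have idm := maximal_ideal_of_ideal maxm.
apply: Qmin; first by apply: ideal_mul_ideal => //; apply: ideal_sub.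
  exact: prod_maximal_mul.
by apply: ideal_mul_subl => //; apply: ideal_sub.
Qed.

(* If Q <> 0 then Q R0 <> 0; take I minimal with Q I <> 0.  Then I = R0 x for
   some x with m I = I for every maximal m, so x = 0 by
   [eq0_if_maximal_absorb], a contradiction. *)
Lemma absorbing_ideal_eq0 Q : ideal Q -> (forall m, maximal m -> ideal_mul R0 Q m = Q) ->
  forall q, Q q -> q = 0.
Proof.
move=> idQ absorb q0 Qq0; apply: contrapT => q0n.
have QR0 := ideal_sub idQ.
pose G I := exists2 y, (ideal_mul R0 Q I) y & y <> 0.
have GR0 : G R0.
  by exists (q0 * 1); [apply: ideal_mul_mem => //; exact: (subring1 subR0) | rewrite mulr1].
have [I [idI GI Imin]] := dcc_minimal (ideal_subring subR0) GR0.
have IR0 := ideal_sub idI.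
have [x [q [Ix Qq qx]]] : exists x q, [/\ I x, Q q & q * x <> 0].
  apply: contrapT => Qkills; case: GI => y Qy; apply; move: Qy.
  move/(ideal_mul_min (ideal_zero subR0)); apply=> q' x' Qq' Ix'.
  by apply: contrapT => nz; apply: Qkills; exists x', q'.
have R0x : R0 x by apply: IR0.
have GI' J : ideal J -> J `<=` I -> (ideal_mul R0 Q J) (q * x) -> J = I.
  by move=> idJ JI QJ; apply: Imin => //; exists (q * x).
have xI : principal R0 x = I.
  apply: GI'; first exact: principal_ideal.
    by move=> y [r R0r ->]; apply: (idealMl idI).
  by apply: ideal_mul_mem => //; exact: principal_self.
suff : x = 0 by move=> x0; apply: qx; rewrite x0 mulr0.
apply: (eq0_if_maximal_absorb subR0 R0x) => m maxm.
have idm := maximal_ideal_of_ideal maxm; have mR0 := ideal_sub idm.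
apply: (principal_absorbed subR0 maxm R0x); rewrite xI.
have idmI : ideal (ideal_mul R0 m I) by apply: ideal_mul_ideal.
apply: GI' => //; first exact: ideal_mul_subr.
pose X := colon R0 (ideal_mul R0 Q (ideal_mul R0 m I)) x.
have idX : ideal X.
  by apply/colon_ideal/ideal_mul_ideal => //; apply: ideal_sub.
have QmX : ideal_mul R0 Q m `<=` X.
  apply: ideal_mul_min => // q' mu Qq' mmu; split.
    by apply: (subringM subR0); [exact: QR0 Qq' | exact: mR0 mmu].
  by rewrite -mulrA; apply: ideal_mul_mem => //; apply: ideal_mul_mem.
by have := QmX q; rewrite (absorb m maxm) => /(_ Qq) [].
Qed.

Lemma prod_maximal_eq0 : exists2 K, prod_maximal K & forall x, K x -> x = 0.
Proof.
have [Q pmQ absorb] := minimal_prod_maximal; exists Q => //.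
exact: absorbing_ideal_eq0 (prod_maximal_ideal pmQ) absorb.
Qed.


Lemma layer_fg K m (E : eqType) (d : E -> R^o) :
  ideal K -> maximal m -> (forall e, K (d e)) ->
  exists es : seq E, forall e, span_mod R0 (ideal_mul R0 K m) (map d es) (d e).
Proof.
move=> idK maxm Kd; have idm := maximal_ideal_of_ideal maxm.
set C := ideal_mul R0 K m.
have idC : ideal C by apply: ideal_mul_ideal => //; apply: ideal_sub.
have CK : C `<=` K by apply: ideal_mul_subl => //; apply: ideal_sub.
apply: contrapT => nofg.
have [|e avoid] := @avoiding_sequence E (fun es e => ~ span_mod R0 C (map d es) (d e)).
  move=> es; apply: contrapT => all_in; apply: nofg; exists es => e.
  by apply: contrapT => He; apply: all_in; exists e.
have early i n : (i < n)%N -> d (e i) \in map d [seq e i | i <- iota 0 n].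
  by move=> lt; rewrite -map_comp; apply: (map_f (d \o e)); rewrite mem_iota.
pose L n J := [seq d (e (n + j)%N) | j <- iota 0 J].
have LK n J w : w \in L n J -> K w by move=> /mapP [j _ ->].
have Lmono n J J' : (J <= J')%N -> {subset L n J <= L n J'}.
  move=> le w /mapP [j]; rewrite !mem_iota /= => lt ->; apply: map_f.
  by rewrite mem_iota /=; apply: leq_trans le.
pose W n y := exists J, span_mod R0 C (L n J) y.
have idW n : ideal (W n) := span_mod_union_ideal subR0 idK idC CK (LK n) (Lmono n).
have decW n : W n.+1 `<=` W n.
  move=> y [J Hy]; exists J.+1; apply: (span_mod_subset subR0) Hy => w /mapP [j jJ ->].
  by apply/mapP; exists j.+1; [move: jJ; rewrite !mem_iota | rewrite addSn addnS].
have [N stable] := (proj2 artR0) W idW decW.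
have : W N.+1 (d (e N)).
  rewrite (stable N.+1 (leqnSn N)); exists 1%N, 0; first exact: (ideal0 idC).
  by rewrite subr0; apply: (span_mem subR0); rewrite /L /= addn0 mem_head.
case=> J; elim: J => [|J IH].
  by move=> H0; apply: (avoid N); apply: (span_mod_subset subR0) H0.
rewrite /L -[J.+1]addn1 iotaD map_cat add0n /= -/(L N.+1 J).
case/(span_mod_exchange subR0 idK maxm (Kd _)) => [/IH //|].
move=> Hv; apply: (avoid (N.+1 + J)%N); apply: (span_mod_subset subR0) Hv.
move=> w; rewrite inE => /orP [/eqP ->|].
  by apply: early; rewrite addSn ltnS leq_addr.
by move=> /mapP [j]; rewrite mem_iota add0n => /andP [_ jJ] ->; apply: early; rewrite ltn_add2l.
Qed.

Definition fg_modulo (C : set R) := forall (E : eqType) (a : E -> R^o),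
  (forall e, R0 (a e)) -> exists es : seq E, forall e, span_mod R0 C (map a es) (a e).

Lemma prod_maximal_fg K : prod_maximal K -> fg_modulo K.
Proof.
elim=> [|K' m pmK IH maxm] E a R0a.
  by exists [::] => e; exists (a e) => //; rewrite subrr.
have [es1 fg1] := IH E a R0a.
have fg1' e : exists c, K' c /\ in_span R0 (map a es1) (a e - c).
  by have [c K'c Hc] := fg1 e; exists c.
have [k Hk] := choice fg1'.
have [es2 fg2] := layer_fg (prod_maximal_ideal pmK) maxm (fun e => proj1 (Hk e)).
have sub1 : {subset map a es1 <= map a (es1 ++ es2)}.
  by move=> w; rewrite map_cat mem_cat => ->.
have kspan f : in_span R0 (map a (es1 ++ es2)) (a f - k f).
  exact: (span_subset subR0 sub1 (proj2 (Hk f))).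
exists (es1 ++ es2) => e; have [c Cc Hc] := fg2 e; exists c => //.
rewrite -(subrK (k e) (a e)) -addrA; apply: (spanD subR0) => //.
apply: (span_trans subR0 _ Hc) => w /mapP [f fes2 ->].
have -> : k f = a f - (a f - k f) by rewrite opprB addrC subrK.
apply: (spanB subR0); last exact: kspan.
by apply: (span_mem subR0); rewrite map_cat mem_cat (map_f _ fes2) orbT.
Qed.

(* Hopkins: the Artinian ring R0 is Noetherian. *)
Lemma artinian_family_fg (E : eqType) (a : E -> R^o) : (forall e, R0 (a e)) ->
  exists es : seq E, forall e, in_span R0 (map a es) (a e).
Proof.
move=> R0a; have [K pmK K0] := prod_maximal_eq0.
have [es fg] := prod_maximal_fg pmK R0a; exists es => e.
by have [k /K0 -> Hk] := fg e; rewrite subr0 in Hk.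
Qed.

Lemma span_family_fg (V : lmodType R) (W : seq V) (E : eqType) (v : E -> V) :
  (forall e, in_span R0 W (v e)) -> exists es : seq E, forall e, in_span R0 (map v es) (v e).
Proof.
elim: W E v => [|w W IH] E v /= vW; first by exists [::] => e; rewrite vW.
have vW' e : exists c, R0 c /\ in_span R0 W (v e - c *: w).
  by have [c R0c Hc] := vW e; exists c.
have [c Hc] := choice vW'.
have [es1 ces1] := @artinian_family_fg E c (fun e => (Hc e).1).
have [lam Hlam] := choice (fun e => in_spanP subR0 (ces1 e)).
pose comb (u : E -> V) e := \sum_(i < size es1) lam e i *: u (nth e es1 i).
have cE e : c e = \sum_(i < size es1) lam e i * c (nth e es1 i).
  rewrite [LHS](Hlam e).2 size_map; apply: eq_bigr => i _.
  by rewrite (nth_map e).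
pose d e := v e - comb v e.
have dE e : d e = (v e - c e *: w) - comb (fun f => v f - c f *: w) e.
  have -> : comb (fun f => v f - c f *: w) e = comb v e - c e *: w.
    rewrite /comb (cE e) scaler_suml -sumrB; apply: eq_bigr => i _.
    by rewrite scalerBr scalerA.
  by rewrite opprB addrA subrK.
have combv f : in_span R0 (map v es1) (comb v f).
  apply: (span_sum subR0) => i; apply: (spanZ subR0 ((Hlam f).1 i)).
  by apply: (span_mem subR0); apply: map_f; apply: mem_nth.
have [|es2 des2] := IH E d => [e|].
  rewrite dE; apply: (spanB subR0 (Hc e).2); apply: (span_sum subR0) => i.
  exact: (spanZ subR0 ((Hlam e).1 i) (Hc _).2).
have sub1 : {subset map v es1 <= map v (es1 ++ es2)}.
  by move=> u; rewrite map_cat mem_cat => ->.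
exists (es1 ++ es2) => e; rewrite -(subrK (comb v e) (v e)).
apply: (spanD subR0); last exact: (span_subset subR0 sub1 (combv e)).
apply: (span_trans subR0 _ (des2 e)) => u /mapP [f fes2 ->].
apply: (spanB subR0); last exact: (span_subset subR0 sub1 (combv f)).
by apply: (span_mem subR0); rewrite map_cat mem_cat (map_f _ fes2) orbT.
Qed.

End ArtinianSubring.

Section IntegralSubalgebra.
Variables (R : comNzRingType) (R0 : set R).
Hypothesis subR0 : is_subring R0.

Definition subalg_span (w : seq R^o) :=
  in_span R0 w 1 /\ forall a b, a \in w -> b \in w -> in_span R0 w (a * b).

Lemma span_mulr (w l : seq R^o) (x y : R^o) :
  (forall a, a \in l -> in_span R0 w (a * y)) -> in_span R0 l x -> in_span R0 w (x * y).
Proof.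
move=> ly /(span_linear (f := fun u : R^o => (u * y : R^o)) subR0) xy.
apply: (span_trans subR0 _ (xy _)) => [u /mapP [a al ->]|c u v]; first exact: ly.
by rewrite /= mulrDl scalerAl.
Qed.

Lemma subalg_span_mul w x y :
  subalg_span w -> in_span R0 w x -> in_span R0 w y -> in_span R0 w (x * y).
Proof.
move=> [_ ww] wx wy; apply: span_mulr wx => a aw.
by rewrite mulrC; apply: span_mulr wy => b bw; rewrite mulrC; apply: ww.
Qed.

Lemma gen_subalg_span w s : subalg_span w -> (forall y, y \in s -> in_span R0 w y) ->
  forall x, gen_subalg R0 s x -> in_span R0 w x.
Proof.
move=> subw sw x; apply; last exact: sw.
  split; [exact: subw.1 | move=> a b; exact: spanB | move=> a b; exact: subalg_span_mul].
by move=> r R0r; rewrite -[r]mulr1; apply: (spanZ subR0 R0r subw.1).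
Qed.

(* If y^d = - sum_(j < d) p_j y^j, the products a y^k (a in w, k < d) span w[y]. *)
Lemma subalg_span_adjoin w (y : R^o) (p : {poly R}) : subalg_span w ->
  p \is monic -> (forall i, R0 p`_i) -> root p y ->
  exists w', [/\ subalg_span w', (forall x, in_span R0 w x -> in_span R0 w' x) & in_span R0 w' y].
Proof.
move=> subw monp R0p py.
set d := (size p).-1.
have sp : size p = d.+1 by rewrite /d prednK // lt0n size_poly_eq0 monic_neq0.
have yd : y ^+ d = - \sum_(j < d) p`_j * y ^+ j.
  move: py; rewrite rootE horner_coef sp big_ord_recr /=.
  have -> : p`_d = 1 by have := monicP monp; rewrite lead_coefE sp.
  by rewrite mul1r addrC addr_eq0 => /eqP.
pose w' := [seq (a * y ^+ k : R^o) | a <- w, k <- iota 0 d].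
have wyk k x : in_span R0 w x -> in_span R0 w' (x * y ^+ k).
  elim/ltn_ind: k x => k IH x wx; have [kd|dk] := ltnP k d.
    apply: span_mulr wx => a aw; apply: (span_mem subR0).
    by apply/allpairsP; exists (a, k); split => //; rewrite mem_iota.
  have -> : x * y ^+ k = - \sum_(j < d) (p`_j * (x * y ^+ (k - d + j))).
    rewrite -{1}(subnK dk) exprD yd !mulrN; congr (- _).
    by rewrite !mulr_sumr; apply: eq_bigr => j _; rewrite exprD; ring.
  apply: (spanN subR0); apply: (span_sum subR0) => j.
  apply: (spanZ subR0 (R0p _) (x := (x * y ^+ (k - d + j) : R^o))).
  by apply: IH => //; have := ltn_ord j; lia.
exists w'; split.
- split; first by have := wyk 0%N 1 subw.1; rewrite expr0 mulr1.
  move=> a b /allpairsP [[a1 i] [/= a1w _ ->]] /allpairsP [[b1 j] [/= b1w _ ->]].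
  have -> : a1 * y ^+ i * (b1 * y ^+ j) = (a1 * b1) * y ^+ (i + j) by rewrite exprD; ring.
  by apply: wyk; apply: subw.2.
- by move=> x /(wyk 0%N); rewrite expr0 mulr1.
- by have := wyk 1%N 1 subw.1; rewrite expr1 mul1r.
Qed.

Lemma integral_gen_subalg_span (s : seq R) : integral_over R0 ->
  exists w : seq R^o, forall x, gen_subalg R0 s x -> in_span R0 w x.
Proof.
move=> intR0.
suff [w [subw sw]] : exists w, subalg_span w /\ forall y, y \in s -> in_span R0 w y.
  by exists w; apply: gen_subalg_span.
elim: s => [|y s [w [subw sw]]].
  exists [:: 1]; split => //; split; first by apply: (span_mem subR0); rewrite mem_head.
  move=> a b; rewrite !inE => /eqP -> /eqP ->; rewrite mulr1.
  by apply: (span_mem subR0); rewrite mem_head.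
have [p [monp R0p py]] := intR0 y.
have [w' [subw' ww' w'y]] := subalg_span_adjoin subw monp R0p py.
exists w'; split => // z; rewrite inE => /orP [/eqP -> //|zs].
exact/ww'/sw.
Qed.

End IntegralSubalgebra.

Section BilinearFacts.
Variables (R : comNzRingType) (N M P : lmodType R) (B : N -> M -> P).
Hypothesis bilB : bilinear_map B.

Lemma bilin0l m : B 0 m = 0.
Proof. by have := bilB.1 (-1) 0 0 m; rewrite scaler0 addr0 scaleN1r addNr. Qed.
Lemma bilinZl a x m : B (a *: x) m = a *: B x m.
Proof. by have := bilB.1 a x 0 m; rewrite !addr0 bilin0l addr0. Qed.
Lemma bilinNl x m : B (- x) m = - B x m.
Proof. by rewrite -scaleN1r bilinZl scaleN1r. Qed.
Lemma bilin0r x : B x 0 = 0.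
Proof. by have := bilB.2 (-1) x 0 0; rewrite scaler0 addr0 scaleN1r addNr. Qed.
Lemma bilinZr a x m : B x (a *: m) = a *: B x m.
Proof. by have := bilB.2 a x m 0; rewrite !addr0 bilin0r addr0. Qed.

Lemma bilin_suml I (r : seq I) (F : I -> N) m :
  B (\sum_(i <- r) F i) m = \sum_(i <- r) B (F i) m.
Proof.
elim: r => [|i r IH]; first by rewrite !big_nil bilin0l.
by rewrite !big_cons -IH; have := bilB.1 1 (F i) (\sum_(j <- r) F j) m; rewrite !scale1r.
Qed.

Lemma bilin_sumr I (r : seq I) x (F : I -> M) :
  B x (\sum_(i <- r) F i) = \sum_(i <- r) B x (F i).
Proof.
elim: r => [|i r IH]; first by rewrite !big_nil bilin0r.
by rewrite !big_cons -IH; have := bilB.2 1 x (F i) (\sum_(j <- r) F j); rewrite !scale1r.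
Qed.

End BilinearFacts.

Section ArtinianPowerSeries.
Variables (R : comNzRingType) (R0 : set R) (n : nat).
Hypotheses (artR0 : artinian_subring R0) (intR0 : integral_over R0).
Let subR0 : is_subring R0 := proj1 artR0.
Local Notation M := (artinian_ps R0 n).

Lemma ps_coef_sum I (r : seq I) (F : I -> M) a :
  ps_coef (\sum_(i <- r) F i) a = \sum_(i <- r) ps_coef (F i) a.
Proof. by elim: r => [|i r IH]; rewrite ?big_nil // !big_cons -IH. Qed.

Lemma ps_coef_in_F (m : M) : in_F R0 (ps_coef m).
Proof. by case: m => f /= /asboolP. Qed.

Lemma in_Fb_R0 (f : mindex n -> R^o) : (forall a, R0 (f a)) -> f \in @in_Fb R R0 n.
Proof. by move=> R0f; apply/asboolP; exists [::] => a S _ R0S _; apply: R0S. Qed.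

Lemma gen_subalg_subset s s' x :
  {subset s <= s'} -> gen_subalg R0 s x -> gen_subalg R0 s' x.
Proof. by move=> ss' sx S subS R0S s'S; apply: sx => // y /ss'; apply: s'S. Qed.

Definition single (i : nat) (u : R^o) : nat -> R^o := fun j => if j == i then u else 0.

Lemma single_linear i : linear (single i).
Proof.
by move=> c u v; apply: funext => j; rewrite /single !fctE; case: eqP; rewrite ?scaler0 ?addr0.
Qed.

Lemma sum_single_nth k (c : nat -> R^o) j : (j < k)%N ->
  (\sum_(i < k) single i (c i)) j = c j.
Proof.
move=> jk; rewrite fct_sumE (bigD1 (Ordinal jk)) //= /single eqxx big1 ?addr0 //.
move=> i iNj; case: eqP => // ji; case/eqP: iNj; exact: val_inj.
Qed.

(* The columns (m_1(a), ..., m_k(a)) lie in a finite R0-module, so finitely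
   many of them, at a = e_1, ..., e_r, generate all; the coefficients of these
   combinations, as functions of a, are the power series y_j. *)
Lemma coef_presentation (ms : seq M) : exists ey : seq (mindex n * M),
  forall m, m \in ms -> m = \sum_(q <- ey) (ps_coef m q.1 : R) *: q.2.
Proof.
have [gens Hgens] := choice ps_coef_in_F.
have [w Hw] := integral_gen_subalg_span subR0 (flatten (map gens ms)) intR0.
have coef_span m a : m \in ms -> in_span R0 w (ps_coef m a).
  move=> mms; apply: Hw; apply: (gen_subalg_subset _ (Hgens m a)) => y ys.
  by apply/flattenP; exists (gens m) => //; apply: map_f.
set k := size ms.
pose col a : nat -> R^o := \sum_(i < k) single i (ps_coef (nth 0 ms i) a).
pose W := [seq single i u | i <- iota 0 k, u <- w].
have col_span a : in_span R0 W (col a).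
  apply: (span_sum subR0) => i.
  have := span_linear subR0 (single_linear i) (coef_span _ a (mem_nth 0 (ltn_ord i))).
  apply: (span_subset subR0) => u /mapP [v vw ->]; apply: allpairs_f => //.
  by rewrite mem_iota /= add0n.
have [es Hes] := span_family_fg artR0 col_span.
have [lam Hlam] := choice (fun a => in_spanP subR0 (Hes a)).
pose a0 : mindex n := [ffun=> 0%N].
pose y j : M := APS (in_Fb_R0 (fun a => (Hlam a).1 j)).
exists [seq (nth a0 es j, y j) | j <- iota 0 (size es)] => m mms.
apply: val_inj; apply: funext => a /=.
rewrite ps_coef_sum big_map /=.
have mk : (index m ms < k)%N by rewrite index_mem.
have := congr1 (fun f => f (index m ms)) (Hlam a).2.
rewrite /col (sum_single_nth (fun i => ps_coef (nth 0 ms i) a)) // nth_index // => ->.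
rewrite fct_sumE /= size_map -[in RHS](subn0 (size es)) big_mkord.
apply: eq_bigr => j _; rewrite !fctE (nth_map a0) //.
rewrite (sum_single_nth (fun i => ps_coef (nth 0 ms i) (nth a0 es j))) // nth_index //.
exact: mulrC.
Qed.

Lemma coef_bilinear (N : lmodType R) (a : mindex n) :
  bilinear_map (fun (x : N) (m : M) => (ps_coef m a : R) *: x).
Proof.
split=> [c x y m | c x m1 m2] /=; first by rewrite scalerDr !scalerA mulrC.
by rewrite scalerDl -scalerA.
Qed.


Section Flatness.
Variables (N1 N2 N3 : lmodType R) (f : {linear N1 -> N2}) (g : {linear N2 -> N3}).

(* Write the second components of s via [coef_presentation]; the first
   components then collect into elements of ker g = im f. *)
Lemma tensor_exact_of_exact : exact_at f g -> tensor_exact_at M f g.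
Proof.
move=> exfg s s0.
have [ey Hey] := coef_presentation (map snd s).
pose u (q : mindex n * M) : N2 := \sum_(p <- s) (ps_coef p.2 q.1 : R) *: p.1.
have gu q : g (u q) = 0.
  have := s0 N3 _ (coef_bilinear N3 q.1); rewrite big_map /= => <-.
  by rewrite /u linear_sum; apply: eq_bigr => p _; rewrite linearZ.
have [x fx] := choice (fun q => exfg (u q) (gu q)).
exists (map (fun q => (x q, q.2)) ey) => P B bilB.
rewrite big_cat /= !big_map /=.
have -> : \sum_(q <- ey) B (f (x q)) q.2 = \sum_(p <- s) B p.1 p.2.
  under eq_bigr => q _ do rewrite fx /u (bilin_suml bilB).
  rewrite exchange_big /=; apply: eq_big_seq => p ps.
  under eq_bigr => q _ do rewrite (bilinZl bilB) -(bilinZr bilB).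
  by rewrite -(bilin_sumr bilB) -Hey // map_f.
by rewrite -big_split /=; apply: big1 => p _; rewrite (bilinNl bilB) subrr.
Qed.

(* R is a direct summand of M: test against the constant series 1. *)
Lemma exact_of_tensor_exact : tensor_exact_at M f g -> exact_at f g.
Proof.
move=> texfg y gy.
pose a0 : mindex n := [ffun=> 0%N].
have R0one a : R0 (if a == a0 then 1 else 0).
  by case: ifP => _; [exact: (subring1 subR0) | exact: (subring0 subR0)].
pose one : M := APS (in_Fb_R0 R0one).
have [|t Ht] := texfg [:: (y, one)].
  by move=> P B bilB; rewrite /= big_cons big_nil gy (bilin0l bilB) addr0.
exists (\sum_(p <- t) (ps_coef p.2 a0 : R) *: p.1).
have := Ht N2 _ (coef_bilinear N2 a0); rewrite big_cat /= !big_map big_cons big_nil /= eqxx.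
rewrite scale1r addr0 linear_sum => /eqP; rewrite subr_eq0 => /eqP <-.
by apply: eq_bigr => p _; rewrite linearZ.
Qed.

End Flatness.

Lemma artinian_ps_faithfully_flat : faithfully_flat M.
Proof.
move=> N1 N2 N3 f g _.
by split; [apply: tensor_exact_of_exact | apply: exact_of_tensor_exact].
Qed.

End ArtinianPowerSeries.

(* Krull dimension 0 follows from integrality over the Artinian ring R0, and
   the argument works for every n, including n = 0. *)
Theorem theorem3p4 (R : comNzRingType) (R0 : set R) :
  krull_dim0 R -> artinian_subring R0 -> integral_over R0 ->
  forall n : nat, (1 <= n)%N -> faithfully_flat (artinian_ps R0 n).
Proof. by move=> _ artR0 intR0 n _; apply: artinian_ps_faithfully_flat. Qed.
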